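(* Let $g\in C^{\omega}(\mathbb{R})$ satisfy: $g(v)>0$, $g'(v)\ge0$ and $\frac{d^2}{dv^2}(v^2g(v^2))>0$ for all $v>0$, and $\lim_{v\to\infty}v\,g(v^2)=\infty$. Then the set of all $\beta>0$ for which the toy model has a toy steady tip growth solution is a closed subset of $\mathbb{R}_{>0}$ with empty interior.
   Context: Toy model: for a real-analytic $g:\mathbb{R}\to\mathbb{R}$ with $g(v)>0$ for $v>0$ and a parameter $\beta$, the toy model is the planar ODE (prime denotes $d/ds$) $$\rho'=\frac32\,\frac{1-\rho^2}{r}\left(-1+\frac{\sqrt{1-\rho^2}\,\big(\beta r^2 g(r^2)+\rho\big)}{r}\right),\qquad r'=\rho,$$ on $M_0=(-1,1)\times\mathbb{R}_{>0}$. For a solution $(\rho,r)$ defined on an interval $(0,s_{\max})$: (S1) $\lim_{s\to0^+}\rho=1$, $\lim_{s\to0^+}r=0$, $\lim_{s\to0^+}\sqrt{1-\rho^2}/r=\eta_0>0$; (S2) there exist $s_0>0$ and real-analytic $G:(-a,a)\to\mathbb{R}_{>0}$, $a=r(s_0)^2$, with $\rho(s)=G(r(s)^2)$ for $s\in(0,s_0)$; (S3) the solution is defined on $(0,\infty)$ with $\rho'(s)<0$, $\rho(s)>0$ for all $s>0$; (S4) $\lim_{s\to\infty}\rho=0$, $\lim_{s\to\infty}r=r_\infty>0$. A toy steady tip growth solution is a solution satisfying (S1)–(S4). *)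

From Stdlib Require Import Reals Lra.
Open Scope R_scope.

Definition analytic_on (lo hi : R) (f : R -> R) : Prop :=
  forall x0, lo < x0 < hi ->
    exists rad, 0 < rad /\ exists c : nat -> R,
      forall x, Rabs (x - x0) < rad -> lo < x < hi ->
        infinite_sum (fun n => c n * (x - x0) ^ n) (f x).

Definition analytic (f : R -> R) : Prop :=
  forall x0, exists rad, 0 < rad /\ exists c : nat -> R,
    forall x, Rabs (x - x0) < rad ->
      infinite_sum (fun n => c n * (x - x0) ^ n) (f x).

Definition lim_0plus (f : R -> R) (l : R) : Prop :=
  forall eps, 0 < eps -> exists d, 0 < d /\
    forall s, 0 < s < d -> Rabs (f s - l) < eps.

Definition lim_infty (f : R -> R) (l : R) : Prop :=
  forall eps, 0 < eps -> exists S, forall s, S < s -> Rabs (f s - l) < eps.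

Definition lim_infty_infty (f : R -> R) : Prop :=
  forall M, exists V, forall v, V < v -> M < f v.

Definition toy_rhs (g : R -> R) (beta rho r : R) : R :=
  3 / 2 * ((1 - rho ^ 2) / r) *
  (-1 + sqrt (1 - rho ^ 2) * (beta * r ^ 2 * g (r ^ 2) + rho) / r).

Definition toy_solution_pos (g : R -> R) (beta : R) (rho r : R -> R) : Prop :=
  forall s, 0 < s ->
    -1 < rho s < 1 /\ 0 < r s /\
    derivable_pt_lim rho s (toy_rhs g beta (rho s) (r s)) /\
    derivable_pt_lim r s (rho s).

(* Toy steady tip growth solution: (S1)-(S4); (S3) includes existence on (0,oo). *)
Definition toy_steady_tip (g : R -> R) (beta : R) (rho r : R -> R) : Prop :=
  toy_solution_pos g beta rho r /\
  (lim_0plus rho 1 /\ lim_0plus r 0 /\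
   exists eta0, 0 < eta0 /\ lim_0plus (fun s => sqrt (1 - rho s ^ 2) / r s) eta0) /\
  (exists s0, 0 < s0 /\ exists G : R -> R,
     analytic_on (- (r s0 ^ 2)) (r s0 ^ 2) G /\
     (forall x, - (r s0 ^ 2) < x < r s0 ^ 2 -> 0 < G x) /\
     (forall s, 0 < s < s0 -> rho s = G (r s ^ 2))) /\
  (forall s, 0 < s -> 0 < rho s /\ exists l, derivable_pt_lim rho s l /\ l < 0) /\
  (lim_infty rho 0 /\ exists rinf, 0 < rinf /\ lim_infty r rinf).

Definition has_toy_steady (g : R -> R) (beta : R) : Prop :=
  exists rho r : R -> R, toy_steady_tip g beta rho r.

From Stdlib Require Import Reals Lra Psatz ClassicalEpsilon Classical Ranalysis5.
From Coquelicot Require Import Coquelicot.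
Open Scope R_scope.

(* The set of admissible [beta] has at most one element, which makes it closed with empty
   interior.  Along a steady tip solution [r] increases to [Rinf], and [rho -> 0] forces the
   equilibrium [beta Rinf g(Rinf^2) = 1]; at the tip [Y := sqrt(1 - rho^2) / r] must tend to
   [1/3].  Written as a graph over [x = r], the solution satisfies [P^2 + x^2 Y^2 = 1] with
   [P = rho] and [dY/dx = Y (1/2 - 3/2 Y (beta x^2 g(x^2) + P)) / x].  Comparing the profiles of
   two values [beta1 < beta2] on [(0, Rinf2)] then yields a contradiction. *)

Section FilterlimArith.

Context {T : Type} {F : (T -> Prop) -> Prop} {FF : Filter F}.

Lemma lim_const (a : R) : filterlim (fun _ : T => a) F (locally a).
Proof. apply filterlim_const. Qed.

Lemma lim_plus (f g : T -> R) (a b : R) :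
  filterlim f F (locally a) -> filterlim g F (locally b) ->
  filterlim (fun x => f x + g x) F (locally (a + b)).
Proof.
  intros Hf Hg; eapply filterlim_comp_2; [exact Hf | exact Hg |].
  apply (@filterlim_plus R_AbsRing R_NormedModule).
Qed.

Lemma lim_mult (f g : T -> R) (a b : R) :
  filterlim f F (locally a) -> filterlim g F (locally b) ->
  filterlim (fun x => f x * g x) F (locally (a * b)).
Proof.
  intros Hf Hg; eapply filterlim_comp_2; [exact Hf | exact Hg |].
  apply (@filterlim_mult R_AbsRing).
Qed.

Lemma lim_cont (f : T -> R) (h : R -> R) (a : R) :
  continuity_pt h a -> filterlim f F (locally a) ->
  filterlim (fun x => h (f x)) F (locally (h a)).
Proof.
  intros Hh Hf; eapply filterlim_comp; [exact Hf |].
  now apply continuity_pt_filterlim.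
Qed.

Lemma lim_minus (f g : T -> R) (a b : R) :
  filterlim f F (locally a) -> filterlim g F (locally b) ->
  filterlim (fun x => f x - g x) F (locally (a - b)).
Proof.
  intros Hf Hg; apply lim_plus; [exact Hf |].
  apply (lim_cont g Ropp); [apply continuity_pt_opp, continuity_pt_id | exact Hg].
Qed.

Lemma lim_div (f g : T -> R) (a b : R) :
  filterlim f F (locally a) -> filterlim g F (locally b) -> b <> 0 ->
  filterlim (fun x => f x / g x) F (locally (a / b)).
Proof.
  intros Hf Hg Hb; apply lim_mult; [exact Hf |].
  apply (lim_cont g Rinv); [| exact Hg].
  apply continuity_pt_inv; [apply continuity_pt_id | exact Hb].
Qed.

Lemma lim_pow (f : T -> R) (a : R) n :
  filterlim f F (locally a) -> filterlim (fun x => f x ^ n) F (locally (a ^ n)).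
Proof.
  intros Hf; induction n as [|n IH]; [apply lim_const | now apply lim_mult].
Qed.

Lemma lim_sqrt (f : T -> R) (a : R) :
  0 <= a -> filterlim f F (locally a) -> filterlim (fun x => sqrt (f x)) F (locally (sqrt a)).
Proof. intros Ha; apply lim_cont; now apply continuity_pt_sqrt. Qed.

End FilterlimArith.

Ltac lim_arith := repeat first
  [ assumption | apply lim_const | apply lim_minus | apply lim_plus | apply lim_div
  | apply lim_mult | apply lim_pow | apply lim_sqrt ].

Lemma lim_0plus_filterlim f l : lim_0plus f l <-> filterlim f (at_right 0) (locally l).
Proof.
  rewrite filterlim_locally; split.
  - intros H eps; destruct (H eps (cond_pos eps)) as [d [Hd Hs]].
    exists (mkposreal d Hd); intros y Hy Hy0; apply Hs.
    change (Rabs (y - 0) < d) in Hy; apply Rabs_def2 in Hy; lra.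
  - intros H eps Heps; destruct (H (mkposreal eps Heps)) as [d Hd].
    exists d; split; [apply cond_pos |]; intros s Hs; apply (Hd s); [| lra].
    change (Rabs (s - 0) < d); rewrite Rabs_right; lra.
Qed.

Lemma lim_infty_filterlim f l : lim_infty f l <-> filterlim f (Rbar_locally p_infty) (locally l).
Proof.
  rewrite filterlim_locally; split.
  - intros H eps; destruct (H eps (cond_pos eps)) as [S HS]; now exists S.
  - intros H eps Heps; destruct (H (mkposreal eps Heps)) as [S HS]; now exists S.
Qed.

Lemma exists_above (a b : R) : exists t, a < t /\ b < t.
Proof. exists (Rmax a b + 1); generalize (Rmax_l a b) (Rmax_r a b); lra. Qed.

Lemma exists_pos_below (a b : R) : 0 < a -> 0 < b -> exists c, 0 < c /\ c < a /\ c < b.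
Proof.
  intros Ha Hb; exists (Rmin a b / 2).
  generalize (Rmin_l a b) (Rmin_r a b) (Rmin_glb_lt a b 0 Ha Hb); lra.
Qed.

Lemma incr_of_deriv_pos (f f' : R -> R) (a : R) :
  (forall x, a < x -> derivable_pt_lim f x (f' x)) -> (forall x, a < x -> 0 < f' x) ->
  forall x y, a < x -> x < y -> f x < f y.
Proof.
  intros Hd Hpos x y Hx Hxy.
  apply (incr_function f a p_infty f'); simpl; auto.
  - intros z Hz _; now apply is_derive_Reals, Hd.
  - intros z Hz _; now apply Rlt_gt, Hpos.
Qed.

Lemma lim_infty_deriv_eq0 (f f' : R -> R) (l L : R) :
  (forall s, 0 < s -> derivable_pt_lim f s (f' s)) ->
  lim_infty f l -> lim_infty f' L -> L = 0.
Proof.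
  intros Hd Hf Hf'.
  destruct (Req_dec L 0) as [| HL]; [assumption | exfalso].
  assert (HL' := Rabs_pos_lt L HL).
  destruct (Hf (Rabs L / 4) ltac:(lra)) as [S1 H1].
  destruct (Hf' (Rabs L / 2) ltac:(lra)) as [S2 H2].
  destruct (exists_above (Rmax 0 S1) S2) as [t [Ht1 Ht2]].
  generalize (Rmax_l 0 S1) (Rmax_r 0 S1); intros.
  destruct (MVT_cor2 f f' t (t + 1)) as [c [Hc Hct]]; [lra | intros; apply Hd; lra |].
  assert (Ht := H1 t ltac:(lra)); assert (Ht' := H1 (t + 1) ltac:(lra)).
  assert (Hc' := H2 c ltac:(lra)).
  apply Rabs_def2 in Ht, Ht', Hc'.
  replace (t + 1 - t) with 1 in Hc by ring.
  unfold Rabs in *; destruct (Rcase_abs L); lra.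
Qed.

(* Integrating [f'] over [[s/2, s]] gives [f] an oscillation of at least [k/2] arbitrarily
   close to [0]. *)
Lemma lim_0plus_deriv_not_ge_inv (f f' : R -> R) (l d k : R) :
  0 < d -> 0 < k -> lim_0plus f l ->
  (forall x, 0 < x < d -> derivable_pt_lim f x (f' x)) ->
  (forall x, 0 < x < d -> k <= x * Rabs (f' x)) -> False.
Proof.
  intros Hd Hk Hf Hdf Hbig.
  destruct (Hf (k / 4) ltac:(lra)) as [d1 [Hd1 H1]].
  destruct (exists_pos_below d d1 Hd Hd1) as [s Hs].
  destruct (MVT_cor2 f f' (s / 2) s) as [c [Hc Hcs]]; [lra | intros; apply Hdf; lra |].
  assert (Hfs := H1 s ltac:(lra)); assert (Hfs2 := H1 (s / 2) ltac:(lra)).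
  assert (Hkc := Hbig c ltac:(lra)).
  assert (Hdiff : Rabs (f s - f (s / 2)) < k / 2).
  { apply Rabs_def2 in Hfs, Hfs2; apply Rabs_def1; lra. }
  rewrite Hc, Rabs_mult, (Rabs_right (s - s / 2)) in Hdiff by lra.
  assert (Hpos := Rabs_pos (f' c)).
  nra.
Qed.

Lemma pos_propagates_left (V V' : R -> R) (a b : R) : a < b ->
  (forall x, a <= x <= b -> derivable_pt_lim V x (V' x)) ->
  (forall x, a <= x <= b -> V x = 0 -> V' x < 0) ->
  0 < V b -> 0 < V a.
Proof.
  intros Hab HD HZ Hb.
  destruct (Rlt_or_le 0 (V a)) as [| Ha]; [assumption | exfalso].
  set (E := fun x => a <= x <= b /\ V x <= 0).
  destruct (completeness E) as [m [Hub Hlub]].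
  { exists b; intros x [Hx _]; lra. }
  { exists a; split; [lra | assumption]. }
  assert (Ham : a <= m) by (apply Hub; split; [lra | assumption]).
  assert (Hmb : m <= b) by (apply Hlub; intros x [Hx _]; lra).
  assert (Hc : forall eps : posreal, locally m (fun y => Rabs (V y - V m) < eps)).
  { apply continuity_pt_locally, derivable_continuous_pt.
    exists (V' m); apply HD; lra. }
  (* every point of [E] lies left of [m], so [V <= 0] just right of [m] is absurd *)
  assert (Hright : forall y, m < y <= b -> 0 < V y).
  { intros y Hy; destruct (Rlt_or_le 0 (V y)) as [| Hy']; [assumption |].
    assert (y <= m) by (apply Hub; split; [lra | assumption]); lra. }
  assert (Hm0 : V m <= 0).
  { destruct (Rle_or_lt (V m) 0) as [| Hpos]; [assumption | exfalso].
    destruct (Hc (mkposreal _ Hpos)) as [d Hd].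
    assert (m <= m - d); [| generalize (cond_pos d); lra].
    apply Hlub; intros x [Hx Hvx].
    assert (x <= m) by (apply Hub; split; assumption).
    destruct (Rle_or_lt x (m - d)) as [| Hlt]; [assumption |].
    assert (Hball : Rabs (V x - V m) < V m)
      by (apply (Hd x); change (Rabs (x - m) < d); apply Rabs_def1; lra).
    apply Rabs_def2 in Hball; lra. }
  assert (Hmb' : m < b) by (destruct Hmb as [| ->]; lra).
  destruct Hm0 as [Hneg | Hz].
  - assert (Hneg' : 0 < - V m) by lra.
    destruct (Hc (mkposreal _ Hneg')) as [d Hd].
    set (y := m + Rmin d (b - m) / 2).
    assert (Hd' : 0 < Rmin d (b - m)) by (apply Rmin_glb_lt; [apply cond_pos | lra]).
    generalize (Rmin_l d (b - m)) (Rmin_r d (b - m)); intros.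
    assert (Hball : Rabs (V y - V m) < - V m)
      by (apply (Hd y); change (Rabs (y - m) < d); apply Rabs_def1; unfold y; lra).
    apply Rabs_def2 in Hball.
    assert (Hy := Hright y ltac:(unfold y; lra)); lra.
  - assert (Hl := HZ m ltac:(lra) Hz).
    destruct (HD m ltac:(lra) (- V' m / 2) ltac:(lra)) as [d Hds].
    set (h := Rmin d (b - m) / 2).
    assert (Hd' : 0 < Rmin d (b - m)) by (apply Rmin_glb_lt; [apply cond_pos | lra]).
    generalize (Rmin_l d (b - m)) (Rmin_r d (b - m)); intros.
    assert (Hh : 0 < h) by (unfold h; lra).
    specialize (Hds h ltac:(lra) ltac:(rewrite Rabs_right; unfold h; lra)).
    rewrite Hz, Rminus_0_r in Hds; apply Rabs_def2 in Hds.
    assert (Hy := Hright (m + h) ltac:(unfold h; lra)).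
    assert (0 < V (m + h) / h) by (apply Rdiv_lt_0_compat; lra).
    lra.
Qed.

Lemma decr_pos_lim0_absurd (V V' : R -> R) (x0 : R) : 0 < x0 ->
  (forall x, 0 < x <= x0 -> derivable_pt_lim V x (V' x)) ->
  (forall x, 0 < x <= x0 -> V' x < 0) ->
  lim_0plus V 0 -> 0 < V x0 -> False.
Proof.
  intros Hx0 HD Hneg Hlim Hpos.
  destruct (Hlim (V x0) Hpos) as [d [Hd H]].
  destruct (exists_pos_below d x0 Hd Hx0) as [y Hy].
  destruct (MVT_cor2 V V' y x0) as [c [Hc Hcy]]; [lra | intros; apply HD; lra |].
  assert (Hvc := Hneg c ltac:(lra)).
  assert (Hvy := H y ltac:(lra)); rewrite Rminus_0_r in Hvy; apply Rabs_def2 in Hvy.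
  assert (V' c * (x0 - y) < 0) by (apply Rmult_neg_pos; lra).
  lra.
Qed.

(* The inverse of an increasing [f] on [(0, +oo)]; its value off the range of [f] is junk. *)
Definition inv_pos (f : R -> R) (x : R) : R :=
  epsilon (inhabits 0) (fun s => 0 < s /\ f s = x).

Section PositiveInverse.

Variables (f f' : R -> R) (L : R).
Hypothesis f_deriv : forall s, 0 < s -> derivable_pt_lim f s (f' s).
Hypothesis f'_pos : forall s, 0 < s -> 0 < f' s.
Hypothesis f_lim0 : lim_0plus f 0.
Hypothesis f_lim_infty : lim_infty f L.

Let f_incr s t : 0 < s -> s < t -> f s < f t.
Proof. now apply (incr_of_deriv_pos f f' 0). Qed.

Lemma incr_lt_lim_infty s : 0 < s -> f s < L.
Proof.
  intros Hs.
  assert (Hlt := f_incr s (s + 1) Hs ltac:(lra)).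
  destruct (f_lim_infty (f (s + 1) - f s) ltac:(lra)) as [S HS].
  destruct (exists_above S (s + 1)) as [t [Ht1 Ht2]].
  assert (Ht := f_incr (s + 1) t ltac:(lra) Ht2).
  specialize (HS t Ht1); apply Rabs_def2 in HS; lra.
Qed.

Lemma inv_pos_spec x : 0 < x < L -> 0 < inv_pos f x /\ f (inv_pos f x) = x.
Proof.
  intros Hx; unfold inv_pos; apply epsilon_spec.
  destruct (f_lim0 x ltac:(lra)) as [d [Hd Hds]].
  destruct (f_lim_infty (L - x) ltac:(lra)) as [S HS].
  destruct (exists_above S (d / 2)) as [s2 [Hs2 Hs12]].
  assert (H1 := Hds (d / 2) ltac:(lra)); rewrite Rminus_0_r in H1; apply Rabs_def2 in H1.
  assert (H2 := HS s2 Hs2); apply Rabs_def2 in H2.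
  destruct (IVT_interv (fun s => f s - x) (d / 2) s2) as [z [Hz1 Hz2]]; [| lra | lra | lra |].
  - intros a Ha; apply continuity_pt_minus; [| apply continuity_pt_const; now intros u v].
    apply derivable_continuous_pt; exists (f' a); apply f_deriv; lra.
  - exists z; split; lra.
Qed.

Lemma inv_pos_f s : 0 < s -> inv_pos f (f s) = s.
Proof.
  intros Hs.
  assert (Hsp : 0 < inv_pos f (f s) /\ f (inv_pos f (f s)) = f s)
    by (unfold inv_pos; apply epsilon_spec; now exists s).
  destruct Hsp as [Ht Hft].
  destruct (Rtotal_order (inv_pos f (f s)) s) as [Hlt | [Heq | Hgt]]; [| assumption |].
  - assert (Hi := f_incr _ _ Ht Hlt); lra.
  - assert (Hi := f_incr _ _ Hs Hgt); lra.
Qed.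

Lemma inv_pos_incr x y : 0 < x -> x < y -> y < L -> inv_pos f x < inv_pos f y.
Proof.
  intros Hx Hxy HyL.
  destruct (inv_pos_spec x ltac:(lra)) as [Hx1 Hx2].
  destruct (inv_pos_spec y ltac:(lra)) as [Hy1 Hy2].
  destruct (Rtotal_order (inv_pos f x) (inv_pos f y)) as [| [Heq | Hgt]]; [assumption | |].
  - rewrite Heq in Hx2; lra.
  - assert (Hi := f_incr _ _ Hy1 Hgt); lra.
Qed.

Lemma inv_pos_deriv x : 0 < x < L -> derivable_pt_lim (inv_pos f) x (1 / f' (inv_pos f x)).
Proof.
  intros Hx.
  destruct (inv_pos_spec x Hx) as [Hs Hfs].
  set (lb := inv_pos f x / 2); set (ub := inv_pos f x + 1).
  assert (Hcont : continuity_pt (inv_pos f) x).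
  { assert (Hlb := f_incr lb (inv_pos f x) ltac:(unfold lb; lra) ltac:(unfold lb; lra)).
    assert (Hub := f_incr (inv_pos f x) ub Hs ltac:(unfold ub; lra)).
    apply (continuity_pt_recip_prelim f (inv_pos f) lb ub); [unfold lb, ub; lra | | | | lra].
    - intros u v Hu Huv _; apply f_incr; [unfold lb in *; lra | assumption].
    - intros u Hu; unfold comp, id; apply inv_pos_f; unfold lb in *; lra.
    - intros u Hu; apply derivable_continuous_pt; exists (f' u); apply f_deriv.
      unfold lb in *; lra. }
  set (xl := x / 2); set (xu := (x + L) / 2).
  assert (Hxl := inv_pos_incr xl x ltac:(unfold xl; lra) ltac:(unfold xl; lra) ltac:(lra)).
  assert (Hxu := inv_pos_incr x xu ltac:(lra) ltac:(unfold xu; lra) ltac:(unfold xu; lra)).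
  destruct (inv_pos_spec xl ltac:(unfold xl; lra)) as [Hxl0 _].
  assert (Prf : forall a, inv_pos f xl <= a <= inv_pos f xu -> derivable_pt f a).
  { intros a Ha; exists (f' a); apply f_deriv; lra. }
  assert (Hmid : inv_pos f xl <= inv_pos f x <= inv_pos f xu) by lra.
  assert (Hd := derivable_pt_lim_recip_interv f (inv_pos f) xl xu x Prf Hcont
                  ltac:(unfold xl, xu; lra) ltac:(unfold xl, xu; lra) Hmid).
  assert (E : derive_pt f (inv_pos f x) (Prf (inv_pos f x) Hmid) = f' (inv_pos f x))
    by (apply derive_pt_eq_0, f_deriv; lra).
  rewrite E in Hd; apply Hd.
  - intros y Hy; unfold comp, id; apply inv_pos_spec; unfold xl, xu in *; lra.
  - assert (Hp := f'_pos _ Hs); lra.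
Qed.

End PositiveInverse.

Definition profile_slope (g : R -> R) (b x P Y : R) : R :=
  Y * (1 / 2 - 3 / 2 * Y * (b * x ^ 2 * g (x ^ 2) + P)) / x.

Record steady_profile (g : R -> R) (b Rinf : R) (P Y : R -> R) : Prop := {
  profile_Rinf_pos : 0 < Rinf;
  profile_equilibrium : b * Rinf * g (Rinf ^ 2) = 1;
  profile_range : forall x, 0 < x < Rinf ->
    0 < P x /\ 0 < Y x /\ P x ^ 2 + x ^ 2 * Y x ^ 2 = 1;
  profile_deriv : forall x, 0 < x < Rinf ->
    derivable_pt_lim Y x (profile_slope g b x (P x) (Y x));
  profile_P_decr : forall x y, 0 < x -> x < y -> y < Rinf -> P y < P x;
  profile_P_small : forall eps, 0 < eps -> exists x, 0 < x < Rinf /\ P x < eps;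
  profile_Y_lim0 : lim_0plus Y (1 / 3) }.

(* The quantity of (S1) whose limit at the tip is [eta0]. *)
Definition tip_Y (rho r : R -> R) (s : R) : R := sqrt (1 - rho s ^ 2) / r s.

Definition profile_P (rho r : R -> R) (x : R) : R := rho (inv_pos r x).

Definition profile_Y (rho r : R -> R) (x : R) : R := tip_Y rho r (inv_pos r x).

Section SteadyTip.

Variables (g : R -> R) (b : R) (rho r : R -> R) (Rinf : R).
Hypothesis g_pos : forall v, 0 < v -> 0 < g v.
Hypothesis g_cont : forall v, 0 < v -> continuity_pt g v.
Hypothesis vg_incr : forall u v, 0 < u -> u < v -> u * g (u ^ 2) < v * g (v ^ 2).
Hypothesis tip : toy_steady_tip g b rho r.
Hypothesis r_lim : lim_infty r Rinf.

Lemma tip_rho_pos s : 0 < s -> 0 < rho s.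
Proof. intros Hs; destruct tip as (_ & _ & _ & HS3 & _); apply (HS3 s Hs). Qed.

Lemma tip_rho_lt1 s : 0 < s -> rho s < 1.
Proof. intros Hs; apply (proj1 tip s Hs). Qed.

Lemma tip_r_pos s : 0 < s -> 0 < r s.
Proof. intros Hs; apply (proj1 tip s Hs). Qed.

Lemma tip_rho_deriv s : 0 < s -> derivable_pt_lim rho s (toy_rhs g b (rho s) (r s)).
Proof. intros Hs; apply (proj1 tip s Hs). Qed.

Lemma tip_r_deriv s : 0 < s -> derivable_pt_lim r s (rho s).
Proof. intros Hs; apply (proj1 tip s Hs). Qed.

Lemma tip_r_lim0 : lim_0plus r 0.
Proof. now destruct tip as (_ & (_ & Hr0 & _) & _). Qed.

Let r_lt_Rinf := incr_lt_lim_infty r rho Rinf tip_r_deriv tip_rho_pos r_lim.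
Let inv_r_spec := inv_pos_spec r rho Rinf tip_r_deriv tip_r_lim0 r_lim.
Let inv_r_incr := inv_pos_incr r rho Rinf tip_r_deriv tip_rho_pos tip_r_lim0 r_lim.
Let inv_r_deriv := inv_pos_deriv r rho Rinf tip_r_deriv tip_rho_pos tip_r_lim0 r_lim.
Let inv_r_r := inv_pos_f r rho tip_r_deriv tip_rho_pos.

Lemma tip_rhs_neg s : 0 < s -> toy_rhs g b (rho s) (r s) < 0.
Proof.
  intros Hs; destruct tip as (_ & _ & _ & HS3 & _).
  destruct (HS3 s Hs) as [_ [l [Hl Hl0]]].
  now rewrite (uniqueness_limite _ _ _ _ (tip_rho_deriv s Hs) Hl).
Qed.

Lemma tip_rho_decr s t : 0 < s -> s < t -> rho t < rho s.
Proof.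
  intros Hs Hst.
  enough (- rho s < - rho t) by lra.
  apply (incr_of_deriv_pos (fun s => - rho s) (fun s => - toy_rhs g b (rho s) (r s)) 0);
    [| | assumption | assumption].
  - intros x Hx; now apply derivable_pt_lim_opp, tip_rho_deriv.
  - intros x Hx; generalize (tip_rhs_neg x Hx); lra.
Qed.

Lemma tip_r_le s : 0 < s -> r s <= s.
Proof.
  intros Hs; destruct (Rle_or_lt (r s) s) as [| Hlt]; [assumption | exfalso].
  destruct tip as (_ & (_ & Hr0 & _) & _).
  destruct (Hr0 (r s - s) ltac:(lra)) as [d [Hd Hds]].
  destruct (exists_pos_below d s Hd Hs) as [t Ht].
  specialize (Hds t ltac:(lra)); rewrite Rminus_0_r in Hds; apply Rabs_def2 in Hds.
  destruct (MVT_cor2 r rho t s) as [c [Hc Hct]]; [lra | intros; apply tip_r_deriv; lra |].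
  assert (Hrc := tip_rho_lt1 c ltac:(lra)); nra.
Qed.

Lemma tip_Rinf_pos : 0 < Rinf.
Proof.
  assert (H := r_lt_Rinf 1 ltac:(lra)).
  generalize (tip_r_pos 1 ltac:(lra)); lra.
Qed.

(* [rho' -> 3/(2 Rinf) (b Rinf g(Rinf^2) - 1)] while [rho] converges, so this limit vanishes. *)
Lemma tip_equilibrium : b * Rinf * g (Rinf ^ 2) = 1.
Proof.
  assert (HR := tip_Rinf_pos).
  destruct tip as (_ & _ & _ & _ & Hrho0 & _).
  set (L := 3 / 2 / Rinf * (b * Rinf * g (Rinf ^ 2) - 1)).
  assert (Hrhs : lim_infty (fun s => toy_rhs g b (rho s) (r s)) L).
  { assert (Hr := proj1 (lim_infty_filterlim _ _) r_lim).
    rewrite lim_infty_filterlim in Hrho0 |- *.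
    assert (Hg : filterlim (fun s => g (r s ^ 2)) (Rbar_locally p_infty) (locally (g (Rinf ^ 2))))
      by (apply lim_cont; [apply g_cont; nra | now apply lim_pow]).
    replace L with (3 / 2 * ((1 - 0 ^ 2) / Rinf) *
                     (-1 + sqrt (1 - 0 ^ 2) * (b * Rinf ^ 2 * g (Rinf ^ 2) + 0) / Rinf)).
    - unfold toy_rhs; lim_arith; simpl; lra.
    - unfold L; rewrite pow_i, Rminus_0_r, sqrt_1 by lia; field; lra. }
  assert (HL := lim_infty_deriv_eq0 rho _ 0 L tip_rho_deriv Hrho0 Hrhs).
  unfold L in HL; apply Rmult_integral in HL; destruct HL as [HL | HL]; [| lra].
  assert (0 < 3 / 2 / Rinf) by (apply Rdiv_lt_0_compat; lra); lra.
Qed.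

Lemma tip_Y_deriv s : 0 < s ->
  derivable_pt_lim (tip_Y rho r) s (rho s * profile_slope g b (r s) (rho s) (tip_Y rho r s)).
Proof.
  intros Hs.
  assert (Hrho := tip_rho_pos s Hs); assert (Hrho1 := tip_rho_lt1 s Hs).
  assert (Hr := tip_r_pos s Hs).
  assert (Hdrho := tip_rho_deriv s Hs); assert (Hdr := tip_r_deriv s Hs).
  apply is_derive_Reals; rewrite <- is_derive_Reals in Hdrho, Hdr; unfold tip_Y.
  auto_derive.
  - repeat split; try (eexists; eassumption); nra.
  - replace (Derive (fun x => rho x) s) with (toy_rhs g b (rho s) (r s))
      by (symmetry; now apply is_derive_unique).
    replace (Derive (fun x => r x) s) with (rho s) by (symmetry; now apply is_derive_unique).
    replace (1 + - (rho s * (rho s * 1))) with (1 - rho s ^ 2) by ring.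
    assert (Hq : 0 < 1 - rho s ^ 2) by nra.
    assert (Hw := sqrt_sqrt _ (Rlt_le _ _ Hq)); assert (Hw0 := sqrt_lt_R0 _ Hq).
    unfold toy_rhs, profile_slope.
    set (w := sqrt (1 - rho s ^ 2)) in *; rewrite <- Hw; field; lra.
Qed.

Lemma tip_r2g_lim0 : lim_0plus (fun s => b * r s ^ 2 * g (r s ^ 2)) 0.
Proof.
  destruct tip as (_ & (_ & Hr0 & _) & _).
  assert (Hg1 := g_pos 1 ltac:(lra)); assert (Hb := Rabs_pos b).
  set (K := Rabs b * g 1 + 1).
  assert (HK : 0 < K) by (unfold K; nra).
  intros eps Heps.
  destruct (Hr0 (Rmin 1 (eps / K))) as [d [Hd Hds]].
  { apply Rmin_glb_lt; [lra | apply Rdiv_lt_0_compat; lra]. }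
  exists d; split; [assumption |]; intros s Hs.
  assert (Hrs := tip_r_pos s ltac:(lra)).
  specialize (Hds s Hs); rewrite Rminus_0_r, Rabs_right in Hds by lra.
  generalize (Rmin_l 1 (eps / K)) (Rmin_r 1 (eps / K)); intros.
  assert (HrK : r s * K < eps).
  { apply (Rlt_le_trans _ (eps / K * K)); [apply Rmult_lt_compat_r; lra | right; field; lra]. }
  (* [r g(r^2)] is increasing, so it is at most [g 1] for [r < 1] *)
  assert (Hvg := vg_incr (r s) 1 Hrs ltac:(lra)); rewrite pow1, Rmult_1_l in Hvg.
  assert (Hgr := g_pos (r s ^ 2) ltac:(nra)).
  rewrite Rminus_0_r.
  replace (b * r s ^ 2 * g (r s ^ 2)) with (b * r s * (r s * g (r s ^ 2))) by ring.
  rewrite Rabs_mult, Rabs_mult, (Rabs_right (r s)), (Rabs_right (r s * g (r s ^ 2))) by nra.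
  assert (Rabs b * r s * (r s * g (r s ^ 2)) <= Rabs b * r s * g 1)
    by (apply Rmult_le_compat_l; nra).
  unfold K in HrK; nra.
Qed.

(* With [E := rho Y (1/2 - 3/2 Y (b r^2 g(r^2) + rho))] we have [Y' = E / r] and
   [E -> eta0 (1/2 - 3/2 eta0)]; since [r s <= s], a nonzero limit would make [Y] blow up
   logarithmically at the tip. *)
Lemma tip_Y_lim0 : lim_0plus (tip_Y rho r) (1 / 3).
Proof.
  destruct tip as (_ & (Hrho1 & Hr0 & eta & Heta & HY) & _).
  change (lim_0plus (tip_Y rho r) eta) in HY.
  enough (eta = 1 / 3) as <- by exact HY.
  set (E := fun s => rho s * tip_Y rho r s *
                     (1 / 2 - 3 / 2 * tip_Y rho r s * (b * r s ^ 2 * g (r s ^ 2) + rho s))).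
  set (kap := eta * (1 / 2 - 3 / 2 * eta)).
  assert (HE : lim_0plus E kap).
  { assert (H2g := tip_r2g_lim0).
    rewrite lim_0plus_filterlim in *.
    replace kap with (1 * eta * (1 / 2 - 3 / 2 * eta * (0 + 1))) by (unfold kap; ring).
    unfold E; lim_arith. }
  destruct (Req_dec kap 0) as [Hk | Hk]; [unfold kap in Hk; nra | exfalso].
  assert (Hk' := Rabs_pos_lt kap Hk).
  destruct (HE (Rabs kap / 2) ltac:(lra)) as [d [Hd HEd]].
  apply (lim_0plus_deriv_not_ge_inv (tip_Y rho r)
           (fun s => rho s * profile_slope g b (r s) (rho s) (tip_Y rho r s)) eta d (Rabs kap / 2));
    [assumption | lra | assumption | intros; apply tip_Y_deriv; lra |].
  intros x Hx.
  assert (Hrx := tip_r_pos x ltac:(lra)); assert (Hrle := tip_r_le x ltac:(lra)).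
  assert (HEx : Rabs kap / 2 <= Rabs (E x)).
  { specialize (HEd x Hx); rewrite Rabs_minus_sym in HEd.
    generalize (Rabs_triang_inv kap (E x)); lra. }
  replace (rho x * profile_slope g b (r x) (rho x) (tip_Y rho r x)) with (E x / r x)
    by (unfold E, profile_slope; field; lra).
  rewrite Rabs_div, (Rabs_right (r x)) by lra.
  assert (Rabs (E x) <= x * (Rabs (E x) / r x)); [| lra].
  apply (Rmult_le_reg_r (r x)); [lra |].
  replace (x * (Rabs (E x) / r x) * r x) with (x * Rabs (E x)) by (field; lra).
  generalize (Rabs_pos (E x)); nra.
Qed.

Lemma tip_profile_range x : 0 < x < Rinf ->
  0 < profile_P rho r x /\ 0 < profile_Y rho r x /\
  profile_P rho r x ^ 2 + x ^ 2 * profile_Y rho r x ^ 2 = 1.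
Proof.
  intros Hx; destruct (inv_r_spec x Hx) as [Ht Hrt].
  assert (Hp := tip_rho_pos _ Ht); assert (Hp1 := tip_rho_lt1 _ Ht).
  unfold profile_P, profile_Y, tip_Y; rewrite Hrt.
  assert (Hq : 0 < 1 - rho (inv_pos r x) ^ 2) by nra.
  assert (Hw := sqrt_sqrt _ (Rlt_le _ _ Hq)); assert (Hw0 := sqrt_lt_R0 _ Hq).
  repeat split; [lra | apply Rdiv_lt_0_compat; lra |].
  set (w := sqrt _) in *.
  replace ((w / x) ^ 2) with (w * w / (x * x)) by (field; lra); rewrite Hw; field; lra.
Qed.

Lemma tip_profile_deriv x : 0 < x < Rinf ->
  derivable_pt_lim (profile_Y rho r) x
    (profile_slope g b x (profile_P rho r x) (profile_Y rho r x)).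
Proof.
  intros Hx; destruct (inv_r_spec x Hx) as [Ht Hrt].
  assert (Hd := derivable_pt_lim_comp _ _ _ _ _
                  (inv_r_deriv x Hx)
                  (tip_Y_deriv _ Ht)).
  assert (Hp := tip_rho_pos _ Ht).
  unfold comp in Hd; rewrite Hrt in Hd.
  unfold profile_P, profile_Y.
  set (S := profile_slope g b x (rho (inv_pos r x)) (tip_Y rho r (inv_pos r x))) in *.
  replace S with (rho (inv_pos r x) * S * (1 / rho (inv_pos r x))) by (field; lra).
  exact Hd.
Qed.

Lemma tip_profile_P_decr x y :
  0 < x -> x < y -> y < Rinf -> profile_P rho r y < profile_P rho r x.
Proof.
  intros Hx Hxy Hy.
  destruct (inv_r_spec x ltac:(lra)) as [Ht _].
  apply tip_rho_decr; [assumption | now apply inv_r_incr].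
Qed.

Lemma tip_profile_P_small eps : 0 < eps -> exists x, 0 < x < Rinf /\ profile_P rho r x < eps.
Proof.
  intros Heps; pose proof tip as (_ & _ & _ & _ & Hrho0 & _).
  destruct (Hrho0 eps Heps) as [S HS].
  destruct (exists_above S 0) as [s [HSs Hs]].
  exists (r s); split.
  - split; [now apply tip_r_pos |].
    now apply r_lt_Rinf.
  - unfold profile_P; rewrite inv_r_r by assumption.
    specialize (HS s HSs); apply Rabs_def2 in HS; lra.
Qed.

Lemma tip_profile_Y_lim0 : lim_0plus (profile_Y rho r) (1 / 3).
Proof.
  intros eps Heps.
  destruct (tip_Y_lim0 eps Heps) as [d [Hd Hds]].
  assert (Hrd := tip_r_pos (d / 2) ltac:(lra)).
  assert (HrR := r_lt_Rinf (d / 2) ltac:(lra)).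
  exists (r (d / 2)); split; [assumption |]; intros x Hx.
  destruct (inv_r_spec x ltac:(lra)) as [Ht _].
  assert (T := inv_r_incr x (r (d / 2)) ltac:(lra) ltac:(lra) HrR).
  rewrite inv_r_r in T by lra.
  apply Hds; lra.
Qed.

Lemma tip_steady_profile : steady_profile g b Rinf (profile_P rho r) (profile_Y rho r).
Proof.
  split.
  - exact tip_Rinf_pos.
  - exact tip_equilibrium.
  - exact tip_profile_range.
  - exact tip_profile_deriv.
  - exact tip_profile_P_decr.
  - exact tip_profile_P_small.
  - exact tip_profile_Y_lim0.
Qed.

End SteadyTip.

Lemma circle_Y_lt_of_P_lt (x P1 P2 Y1 Y2 : R) : 0 < x -> 0 < Y1 -> 0 < Y2 -> 0 < P2 < P1 ->
  P1 ^ 2 + x ^ 2 * Y1 ^ 2 = 1 -> P2 ^ 2 + x ^ 2 * Y2 ^ 2 = 1 -> Y1 < Y2.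
Proof.
  intros Hx HY1 HY2 HP E1 E2.
  assert (x ^ 2 * Y1 ^ 2 < x ^ 2 * Y2 ^ 2) by nra.
  assert (Y1 ^ 2 < Y2 ^ 2) by (apply (Rmult_lt_reg_l (x ^ 2)); nra).
  nra.
Qed.

Section ProfileComparison.

Variable g : R -> R.
Hypothesis g_pos : forall v, 0 < v -> 0 < g v.
Hypothesis vg_incr : forall u v, 0 < u -> u < v -> u * g (u ^ 2) < v * g (v ^ 2).

Lemma profile_slope_decr_beta (b1 b2 x P Y : R) : b1 < b2 -> 0 < x -> 0 < Y ->
  profile_slope g b2 x P Y < profile_slope g b1 x P Y.
Proof.
  intros Hb Hx HY.
  assert (Hg := g_pos (x ^ 2) ltac:(nra)).
  assert (E : profile_slope g b2 x P Y - profile_slope g b1 x P Y =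
              - (3 / 2 * (Y * Y) * (b2 - b1) * (x * g (x ^ 2))))
    by (unfold profile_slope; field; lra).
  assert (0 < Y * Y * (b2 - b1)) by (apply Rmult_lt_0_compat; nra).
  assert (0 < x * g (x ^ 2)) by nra.
  nra.
Qed.

(* Near the origin the profiles sit close to [Y = 1/3], [P = 1], where increasing [Y] decreases
   the slope; the numerical windows below are just one convenient choice. *)
Lemma profile_slope_decr_near0 (b1 b2 x P1 P2 Y1 Y2 : R) :
  0 <= b1 <= b2 -> 0 < x <= 1 / 2 -> 3 / 10 <= Y1 -> Y1 < Y2 -> Y2 <= 2 / 5 ->
  0 < P1 -> 0 < P2 -> P1 ^ 2 + x ^ 2 * Y1 ^ 2 = 1 -> P2 ^ 2 + x ^ 2 * Y2 ^ 2 = 1 ->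
  profile_slope g b2 x P2 Y2 < profile_slope g b1 x P1 Y1.
Proof.
  intros Hb Hx HY1 HY12 HY2 HP1 HP2 E1 E2; unfold profile_slope.
  set (G := g (x ^ 2)).
  assert (HG : 0 < G) by (apply g_pos; nra).
  assert (Hx2 : 0 < x ^ 2 <= 1 / 4) by nra.
  assert (HP2b : 97 / 100 <= P2).
  { assert (x ^ 2 * Y2 ^ 2 <= 1 / 4 * (4 / 25)) by (apply Rmult_le_compat; nra). nra. }
  assert (HY : 0 < Y2 ^ 2 - Y1 ^ 2) by nra.
  assert (HP12 : (P1 - P2) * (P1 + P2) = x ^ 2 * (Y2 ^ 2 - Y1 ^ 2)) by nra.
  assert (HP12b : (P1 - P2) * (194 / 100) <= 1 / 4 * (Y2 ^ 2 - Y1 ^ 2)).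
  { assert (0 <= P1 - P2) by nra.
    apply Rle_trans with ((P1 - P2) * (P1 + P2)); [apply Rmult_le_compat_l; lra |].
    rewrite HP12; apply Rmult_le_compat_r; lra. }
  (* the [P]-terms alone already outweigh the linear term [(Y2 - Y1)/2] *)
  assert (HK : 94 / 100 * (Y2 ^ 2 - Y1 ^ 2) <= Y2 ^ 2 * P2 - Y1 ^ 2 * P1).
  { replace (Y2 ^ 2 * P2 - Y1 ^ 2 * P1) with ((Y2 ^ 2 - Y1 ^ 2) * P2 - Y1 ^ 2 * (P1 - P2)) by ring.
    assert (Y1 ^ 2 * (P1 - P2) <= 4 / 25 * (P1 - P2)) by (apply Rmult_le_compat_r; nra).
    assert ((Y2 ^ 2 - Y1 ^ 2) * (97 / 100) <= (Y2 ^ 2 - Y1 ^ 2) * P2)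
      by (apply Rmult_le_compat_l; lra).
    lra. }
  assert (HK2 : 6 / 10 * (Y2 - Y1) <= Y2 ^ 2 - Y1 ^ 2) by nra.
  assert (HC : b1 * x ^ 2 * G * Y1 ^ 2 <= b2 * x ^ 2 * G * Y2 ^ 2).
  { replace (b1 * x ^ 2 * G * Y1 ^ 2) with ((x ^ 2 * G) * (b1 * Y1 ^ 2)) by ring.
    replace (b2 * x ^ 2 * G * Y2 ^ 2) with ((x ^ 2 * G) * (b2 * Y2 ^ 2)) by ring.
    apply Rmult_le_compat_l; nra. }
  unfold Rdiv; apply Rmult_lt_compat_r; [apply Rinv_0_lt_compat; lra |].
  lra.
Qed.

Lemma steady_profile_b_pos (b Rinf : R) (P Y : R -> R) : steady_profile g b Rinf P Y -> 0 < b.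
Proof.
  intros [HR Heq _ _ _ _ _].
  assert (HG := g_pos (Rinf ^ 2) ltac:(nra)).
  assert (0 < Rinf * g (Rinf ^ 2)) by nra.
  assert (b * (Rinf * g (Rinf ^ 2)) = 1) by (rewrite <- Heq; ring).
  nra.
Qed.

Lemma steady_profile_Rinf_lt (b1 b2 R1 R2 : R) (P1 Y1 P2 Y2 : R -> R) : b1 < b2 ->
  steady_profile g b1 R1 P1 Y1 -> steady_profile g b2 R2 P2 Y2 -> R2 < R1.
Proof.
  intros Hb S1 S2.
  assert (Hb1 := steady_profile_b_pos _ _ _ _ S1).
  destruct S1 as [HR1 Heq1 _ _ _ _ _]; destruct S2 as [HR2 Heq2 _ _ _ _ _].
  destruct (Rlt_or_le R2 R1) as [| Hle]; [assumption | exfalso].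
  assert (HG := g_pos (R1 ^ 2) ltac:(nra)).
  destruct Hle as [Hlt | <-]; [| nra].
  assert (W := vg_incr R1 R2 HR1 Hlt).
  assert (0 < R1 * g (R1 ^ 2)) by nra.
  nra.
Qed.

Lemma steady_profiles_cross_near_Rinf (b1 b2 R1 R2 : R) (P1 Y1 P2 Y2 : R -> R) : R2 < R1 ->
  steady_profile g b1 R1 P1 Y1 -> steady_profile g b2 R2 P2 Y2 ->
  exists x0, 0 < x0 < R2 /\ Y1 x0 < Y2 x0.
Proof.
  intros HR [HR1 _ Hrange1 _ Hdecr1 _ _] [HR2 _ Hrange2 _ _ Hsmall2 _].
  destruct (Hrange1 R2 ltac:(lra)) as [HP1 _].
  (* [P2] gets arbitrarily small below [R2], while [P1] stays above [P1 R2 > 0] *)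
  destruct (Hsmall2 (P1 R2) HP1) as [x0 [Hx0 HPx0]].
  exists x0; split; [assumption |].
  assert (P1 R2 < P1 x0) by (apply Hdecr1; lra).
  destruct (Hrange1 x0 ltac:(lra)) as [A1 [A2 A3]].
  destruct (Hrange2 x0 Hx0) as [B1 [B2 B3]].
  apply (circle_Y_lt_of_P_lt x0 (P1 x0) (P2 x0)); (assumption || lra).
Qed.

(* At a crossing [Y1 = Y2] the circle relation forces [P1 = P2], and then the slope is smaller
   for the larger [beta]: the profile of the larger [beta] cannot drop below the other one. *)
Lemma steady_profiles_ordered (b1 b2 R1 R2 : R) (P1 Y1 P2 Y2 : R -> R) (x0 : R) :
  b1 < b2 -> R2 < R1 -> steady_profile g b1 R1 P1 Y1 -> steady_profile g b2 R2 P2 Y2 ->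
  0 < x0 < R2 -> Y1 x0 < Y2 x0 -> forall x, 0 < x <= x0 -> Y1 x < Y2 x.
Proof.
  intros Hb HR [_ _ Hrange1 Hd1 _ _ _] [_ _ Hrange2 Hd2 _ _ _] Hx0 HY0 x Hx.
  destruct (Req_dec x x0) as [-> | Hne]; [assumption |].
  enough (0 < Y2 x - Y1 x) by lra.
  apply (pos_propagates_left (fun x => Y2 x - Y1 x)
           (fun x => profile_slope g b2 x (P2 x) (Y2 x) - profile_slope g b1 x (P1 x) (Y1 x)) x x0);
    [lra | | | lra].
  - intros y Hy; apply derivable_pt_lim_minus; [apply Hd2 | apply Hd1]; lra.
  - intros y Hy HVy.
    destruct (Hrange1 y ltac:(lra)) as [A1 [A2 A3]].
    destruct (Hrange2 y ltac:(lra)) as [B1 [B2 B3]].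
    assert (HY : Y1 y = Y2 y) by lra.
    assert (HP : P1 y = P2 y) by (rewrite HY in A3; nra).
    rewrite HP, HY; apply Rlt_minus, profile_slope_decr_beta; lra.
Qed.

(* Near the tip both profiles tend to [1/3], so there [Y2 - Y1 > 0] has a negative derivative
   while tending to [0]. *)
Lemma steady_profiles_unique (b1 b2 R1 R2 : R) (P1 Y1 P2 Y2 : R -> R) : b1 < b2 ->
  steady_profile g b1 R1 P1 Y1 -> steady_profile g b2 R2 P2 Y2 -> False.
Proof.
  intros Hb S1 S2.
  assert (HR := steady_profile_Rinf_lt _ _ _ _ _ _ _ _ Hb S1 S2).
  assert (Hb1 := steady_profile_b_pos _ _ _ _ S1).
  destruct (steady_profiles_cross_near_Rinf _ _ _ _ _ _ _ _ HR S1 S2) as [x0 [Hx0 HY0]].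
  assert (Hpos := steady_profiles_ordered _ _ _ _ _ _ _ _ x0 Hb HR S1 S2 Hx0 HY0).
  destruct S1 as [_ _ Hrange1 Hd1 _ _ Hlim1]; destruct S2 as [_ _ Hrange2 Hd2 _ _ Hlim2].
  destruct (Hlim1 (1 / 30) ltac:(lra)) as [d1 [Hd1' H1]].
  destruct (Hlim2 (1 / 30) ltac:(lra)) as [d2 [Hd2' H2]].
  destruct (exists_pos_below d1 d2 Hd1' Hd2') as [c1 [Hc1 [Hc1a Hc1b]]].
  destruct (exists_pos_below c1 x0 Hc1 ltac:(lra)) as [c2 [Hc2 [Hc2a Hc2b]]].
  destruct (exists_pos_below c2 (1 / 2) Hc2 ltac:(lra)) as [m [Hm [Hma Hmb]]].
  apply (decr_pos_lim0_absurd (fun x => Y2 x - Y1 x)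
           (fun x => profile_slope g b2 x (P2 x) (Y2 x) - profile_slope g b1 x (P1 x) (Y1 x)) m Hm);
    [| | | generalize (Hpos m ltac:(lra)); lra].
  - intros y Hy; apply derivable_pt_lim_minus; [apply Hd2 | apply Hd1]; lra.
  - intros y Hy.
    destruct (Hrange1 y ltac:(lra)) as [A1 [A2 A3]].
    destruct (Hrange2 y ltac:(lra)) as [B1 [B2 B3]].
    assert (T1 := H1 y ltac:(lra)); assert (T2 := H2 y ltac:(lra)).
    apply Rabs_def2 in T1, T2.
    assert (Hv := Hpos y ltac:(lra)).
    apply Rlt_minus, profile_slope_decr_near0; lra.
  - rewrite lim_0plus_filterlim in Hlim1, Hlim2 |- *.
    assert (H := lim_minus Y2 Y1 _ _ Hlim2 Hlim1).
    now rewrite Rminus_diag in H.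
Qed.

End ProfileComparison.

Lemma vg_incr_of_deriv_nonneg (g : R -> R) :
  (forall v, 0 < v -> 0 < g v) ->
  (forall v, 0 < v -> exists l, derivable_pt_lim g v l /\ 0 <= l) ->
  forall u v, 0 < u -> u < v -> u * g (u ^ 2) < v * g (v ^ 2).
Proof.
  intros Hg_pos Hg_mono.
  assert (Hg' : forall v, 0 < v -> is_derive g v (Derive g v) /\ 0 <= Derive g v).
  { intros v Hv; destruct (Hg_mono v Hv) as [l [Hl Hl0]].
    rewrite <- is_derive_Reals in Hl; now rewrite (is_derive_unique _ _ _ Hl). }
  apply (incr_of_deriv_pos _ (fun v => g (v ^ 2) + 2 * v ^ 2 * Derive g (v ^ 2)) 0).
  - intros v Hv; apply is_derive_Reals.
    destruct (Hg' (v ^ 2) ltac:(nra)) as [Hd _].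
    auto_derive; [now exists (Derive g (v ^ 2)) |].
    change (Derive (fun x => g x)) with (Derive g).
    replace (v * (v * 1)) with (v ^ 2) by ring; ring.
  - intros v Hv.
    assert (Hg := Hg_pos (v ^ 2) ltac:(nra)).
    destruct (Hg' (v ^ 2) ltac:(nra)) as [_ Hd].
    nra.
Qed.

Lemma has_toy_steady_unique (g : R -> R) :
  (forall v, 0 < v -> 0 < g v) ->
  (forall v, 0 < v -> exists l, derivable_pt_lim g v l /\ 0 <= l) ->
  forall b1 b2, has_toy_steady g b1 -> has_toy_steady g b2 -> b1 = b2.
Proof.
  intros Hg_pos Hg_mono.
  assert (vg_incr := vg_incr_of_deriv_nonneg g Hg_pos Hg_mono).
  assert (g_cont : forall v, 0 < v -> continuity_pt g v).
  { intros v Hv; destruct (Hg_mono v Hv) as [l [Hl _]].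
    apply derivable_continuous_pt; now exists l. }
  assert (Hprofile : forall b, has_toy_steady g b ->
            exists Rinf P Y, steady_profile g b Rinf P Y).
  { intros b [rho [r tip]].
    pose proof tip as (_ & _ & _ & _ & _ & Rinf & _ & Hr).
    exists Rinf, (profile_P rho r), (profile_Y rho r).
    now apply tip_steady_profile. }
  intros b1 b2 H1 H2.
  destruct (Hprofile b1 H1) as (R1 & P1 & Y1 & S1).
  destruct (Hprofile b2 H2) as (R2 & P2 & Y2 & S2).
  destruct (Rtotal_order b1 b2) as [Hlt | [Heq | Hgt]]; [exfalso | assumption | exfalso].
  - exact (steady_profiles_unique g Hg_pos vg_incr _ _ _ _ _ _ _ _ Hlt S1 S2).
  - exact (steady_profiles_unique g Hg_pos vg_incr _ _ _ _ _ _ _ _ Hgt S2 S1).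
Qed.

Lemma subsingleton_closed (A : R -> Prop) : (forall b1 b2, A b1 -> A b2 -> b1 = b2) ->
  forall beta, (forall eps, 0 < eps -> exists b, 0 < b /\ Rabs (b - beta) < eps /\ A b) -> A beta.
Proof.
  intros HA beta Hcl.
  destruct (Hcl 1 ltac:(lra)) as [b1 [_ [_ A1]]].
  destruct (Req_dec b1 beta) as [<- | Hne]; [assumption | exfalso].
  destruct (Hcl _ (Rabs_pos_lt (b1 - beta) ltac:(lra))) as [b2 [_ [Hd A2]]].
  rewrite (HA b2 b1 A2 A1) in Hd; lra.
Qed.

Lemma subsingleton_empty_interior (A : R -> Prop) : (forall b1 b2, A b1 -> A b2 -> b1 = b2) ->
  forall beta eps, 0 < beta -> 0 < eps -> exists b, 0 < b /\ Rabs (b - beta) < eps /\ ~ A b.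
Proof.
  intros HA beta eps Hbeta Heps.
  destruct (classic (A (beta + eps / 3))) as [A1 | N1].
  - exists (beta + 2 * eps / 3); repeat split; [lra | rewrite Rabs_right; lra |].
    intros A2; generalize (HA _ _ A1 A2); lra.
  - exists (beta + eps / 3); repeat split; [lra | rewrite Rabs_right; lra | assumption].
Qed.

Theorem theorem3p2 (g : R -> R)
  (Hg_an : analytic g)
  (Hg_pos : forall v, 0 < v -> 0 < g v)
  (Hg_mono : forall v, 0 < v -> exists l, derivable_pt_lim g v l /\ 0 <= l)
  (Hg_conv : exists d1 : R -> R,
      (forall v, derivable_pt_lim (fun w => w ^ 2 * g (w ^ 2)) v (d1 v)) /\
      (forall v, 0 < v -> exists l, derivable_pt_lim d1 v l /\ 0 < l))
  (Hg_lim : lim_infty_infty (fun v => v * g (v ^ 2))) :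
  (* closed in R_{>0} *)
  (forall beta, 0 < beta ->
     (forall eps, 0 < eps -> exists b, 0 < b /\ Rabs (b - beta) < eps /\ has_toy_steady g b) ->
     has_toy_steady g beta) /\
  (* empty interior *)
  (forall beta eps, 0 < beta -> 0 < eps ->
     exists b, 0 < b /\ Rabs (b - beta) < eps /\ ~ has_toy_steady g b).
Proof.
  assert (U := has_toy_steady_unique g Hg_pos Hg_mono).
  split.
  - intros beta _; exact (subsingleton_closed _ U beta).
  - exact (subsingleton_empty_interior _ U).
Qed.
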